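(* Let $\mathbf{A}\in\mathsf{K}$. Then the following hold. (i) The $\{\wedge,\vee,\neg,0,1\}$-reduct of $\mathbf{A}$ is an involutive bisemilattice. (ii) All homomorphisms $p_{ij}$ in the Płonka sum representation of this reduct are surjective. (iii) Suppose the lowest fibre $\mathbf{A}_0$ is a two-element Boolean algebra. Then there is a unique unary operation $J_2$ on the reduct turning it into a member of $\mathsf{K}$, namely: $J_2a=1$ if $a=1_i$ (the top of fibre $\mathbf{A}_i$) for some $i\in I^+$, and $J_2a=0$ otherwise. Here $I^+=\{i\in I:|A_i|>1\}$.
   Context: $\mathsf{K}$ is the variety of type $\langle\wedge,\vee,\neg,J_2,0,1\rangle$ axiomatised by: - $x\vee x\approx x$; - $x\vee y\approx y\vee x$; - $x\vee(y\vee z)\approx(x\vee y)\vee z$; - $\neg\neg x\approx x$; - $x\wedge y\approx\neg(\neg x\vee\neg y)$; - $x\wedge(\neg x\vee y)\approx x\wedge y$; - $0\vee x\approx x$; - $1\approx\neg0$; - $J_2x\vee\neg J_2x\approx1$; - $x\vee J_2y\approx x\vee J_2(x\vee y)$; - $x\wedge J_2x\approx x$; - $J_2(x\wedge\neg x)\approx0$. An involutive bisemilattice is an algebra $\langle A,\wedge,\vee,\neg,0,1\rangle$ satisfying the first eight identities. Equivalently, it is an algebra isomorphic to a Płonka sum of Boolean algebras. Such a sum is built from: - a join-semilattice $\langle I,\vee,0\rangle$ with least element $0$; - pairwise disjoint Boolean algebras $\mathbf{A}_i$ (fibres); - homomorphisms $p_{ij}:\mathbf{A}_i\to\mathbf{A}_j$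 for $i\le j$, with $p_{ii}=\mathrm{id}$ and $p_{jk}p_{ij}=p_{ik}$. Its universe is $\bigsqcup A_i$. Operations are computed by pushing the arguments via the $p$'s to the fibre indexed by the join of their indices; constants come from $\mathbf{A}_0$. This representation is canonical: $a,b$ lie in the same fibre iff $a\wedge(a\vee b)=a$ and $b\wedge(b\vee a)=b$. Also $p_{ij}(a)=a\wedge(a\vee b)$ for any $b\in A_j$. A fibre is trivial if it is a singleton. *)

Section Algebra.
Variables (A : Type) (meet join : A -> A -> A) (neg : A -> A) (zero one : A).

Record is_IBS : Prop := {
  ibs_idem  : forall x, join x x = x;
  ibs_comm  : forall x y, join x y = join y x;
  ibs_assoc : forall x y z, join x (join y z) = join (join x y) z;
  ibs_negneg : forall x, neg (neg x) = x;
  ibs_meet  : forall x y, meet x y = neg (join (neg x) (neg y));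
  ibs_absorb : forall x y, meet x (join (neg x) y) = meet x y;
  ibs_zero  : forall x, join zero x = x;
  ibs_one   : one = neg zero
}.

Record is_K (J2 : A -> A) : Prop := {
  K_ibs : is_IBS;
  K_J1 : forall x, join (J2 x) (neg (J2 x)) = one;
  K_J2 : forall x y, join x (J2 y) = join x (J2 (join x y));
  K_J3 : forall x, meet x (J2 x) = x;
  K_J4 : forall x, J2 (meet x (neg x)) = zero
}.

(* Canonical Płonka decomposition of an involutive bisemilattice:
   a and b lie in the same fibre. *)
Definition same_fibre (a b : A) : Prop :=
  meet a (join a b) = a /\ meet b (join b a) = b.

(* index of the fibre of a  <=  index of the fibre of c
   (i <= j iff i v j = j, and the fibre of a v c is indexed by i v j). *)
Definition fibre_le (a c : A) : Prop := same_fibre (join a c) c.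

(* p_ij (x) = x /\ (x \/ b) for any b in A_j. *)
Definition p_map (x b : A) : A := meet x (join x b).

(* a is the top element 1_i of its fibre A_i (w.r.t. the Boolean order of the
   fibre, whose meet is the restriction of meet). *)
Definition is_fibre_top (a : A) : Prop :=
  forall b, same_fibre b a -> meet b a = b.

Definition nontrivial_fibre (a : A) : Prop :=
  exists b, same_fibre b a /\ b <> a.

Definition J2_canonical (J2 : A -> A) : Prop :=
  forall a,
    ((is_fibre_top a /\ nontrivial_fibre a) -> J2 a = one) /\
    (~ (is_fibre_top a /\ nontrivial_fibre a) -> J2 a = zero).

Definition lowest_fibre_two : Prop :=
  exists x y : A, x <> y /\ forall z, same_fibre z zero <-> (z = x \/ z = y).

End Algebra.

Arguments is_IBS {A}.
Arguments is_K {A}.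
Arguments same_fibre {A}.
Arguments fibre_le {A}.
Arguments p_map {A}.
Arguments is_fibre_top {A}.
Arguments nontrivial_fibre {A}.
Arguments J2_canonical {A}.
Arguments lowest_fibre_two {A}.

(* In the Płonka decomposition of an involutive bisemilattice, x ∧ 0 is the
   bottom 0_i of the fibre A_i of x, ¬(x ∧ 0) is its top 1_i, and
   p_ij x = x ∧ (x ∨ b) = x ∨ 0_j.  The axioms for J2 say that J2 x lies in
   A_0 (J2 x ∧ 0 = 0) and that p_{0i} (J2 x) = x (x ∨ J2 x = x ∧ J2 x = x).
   So every element of A_j is in the image of p_{0j} = p_ij ∘ p_{0i}, which
   gives (ii).  If A_0 = {0, 1}, then J2 x ∈ {0, 1}: J2 x = 0 forces x = 0_i
   and J2 x = 1 forces x = 1_i, while J2 0_i = J2 (x ∧ ¬x) = 0.  Hence J2 is 1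
   exactly on the tops of the non-trivial fibres; the given J2 witnesses
   existence. *)

From Stdlib Require Import Setoid.

Section InvolutiveBisemilattice.
Variables (A : Type) (meet join : A -> A -> A) (neg : A -> A) (zero one : A).
Hypothesis H : is_IBS meet join neg zero one.

Lemma join_idem x : join x x = x. Proof. exact (ibs_idem _ _ _ _ _ _ H x). Qed.
Lemma join_comm x y : join x y = join y x. Proof. exact (ibs_comm _ _ _ _ _ _ H x y). Qed.
Lemma join_assoc x y z : join x (join y z) = join (join x y) z.
Proof. exact (ibs_assoc _ _ _ _ _ _ H x y z). Qed.
Lemma neg_involutive x : neg (neg x) = x. Proof. exact (ibs_negneg _ _ _ _ _ _ H x). Qed.
Lemma meet_def x y : meet x y = neg (join (neg x) (neg y)).
Proof. exact (ibs_meet _ _ _ _ _ _ H x y). Qed.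
Lemma meet_neg_join x y : meet x (join (neg x) y) = meet x y.
Proof. exact (ibs_absorb _ _ _ _ _ _ H x y). Qed.
Lemma join_0l x : join zero x = x. Proof. exact (ibs_zero _ _ _ _ _ _ H x). Qed.
Lemma join_0r x : join x zero = x. Proof. rewrite join_comm; apply join_0l. Qed.
Lemma one_def : one = neg zero. Proof. exact (ibs_one _ _ _ _ _ _ H). Qed.

Lemma neg_join x y : neg (join x y) = meet (neg x) (neg y).
Proof. rewrite meet_def, !neg_involutive; reflexivity. Qed.
Lemma neg_meet x y : neg (meet x y) = join (neg x) (neg y).
Proof. rewrite meet_def, neg_involutive; reflexivity. Qed.
Lemma neg_inj x y : neg x = neg y -> x = y.
Proof. intro E. rewrite <- (neg_involutive x), <- (neg_involutive y), E; reflexivity. Qed.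

Lemma meet_comm x y : meet x y = meet y x.
Proof. rewrite !meet_def, join_comm; reflexivity. Qed.
Lemma meet_assoc x y z : meet x (meet y z) = meet (meet x y) z.
Proof. rewrite !meet_def, !neg_involutive, join_assoc; reflexivity. Qed.
Lemma meet_idem x : meet x x = x.
Proof. rewrite meet_def, join_idem, neg_involutive; reflexivity. Qed.
Lemma meet_1l x : meet one x = x.
Proof. rewrite meet_def, one_def, neg_involutive, join_0l, neg_involutive; reflexivity. Qed.
Lemma meet_1r x : meet x one = x.
Proof. rewrite meet_comm; apply meet_1l. Qed.
Lemma meet_left_comm x y z : meet x (meet y z) = meet y (meet x z).
Proof. rewrite !meet_assoc, (meet_comm x y); reflexivity. Qed.
Lemma join_left_comm x y z : join x (join y z) = join y (join x z).
Proof. rewrite !join_assoc, (join_comm x y); reflexivity. Qed.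

Lemma join_neg_meet x y : join x (meet (neg x) y) = join x y.
Proof. apply neg_inj. rewrite !neg_join, neg_meet, meet_neg_join; reflexivity. Qed.
Lemma meet_neg_r x : meet x (neg x) = meet x zero.
Proof. rewrite <- (meet_neg_join x zero), join_0r; reflexivity. Qed.
Lemma join_neg_r x : join x (neg x) = join x one.
Proof. rewrite <- (join_neg_meet x one), meet_1r; reflexivity. Qed.
Lemma join_meet_zero x : join x (meet x zero) = x.
Proof. rewrite <- meet_neg_r, meet_comm, join_neg_meet; apply join_idem. Qed.
Lemma meet_zero_idem x : meet (meet x zero) zero = meet x zero.
Proof. rewrite <- meet_assoc, meet_idem; reflexivity. Qed.
Lemma meet_zero_neg x : meet (neg x) zero = meet x zero.
Proof. rewrite <- meet_neg_r, neg_involutive, meet_comm, meet_neg_r; reflexivity. Qed.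
Lemma neg_meet_zero x : neg (meet x zero) = join x (neg x).
Proof.
  rewrite neg_meet, <- one_def, <- (join_neg_r (neg x)), neg_involutive, join_comm.
  reflexivity.
Qed.

Lemma meet_zero_join x y : meet (join x y) zero = meet (meet x y) zero.
Proof.
  rewrite <- meet_neg_r, neg_join, meet_assoc, (meet_comm (join x y)).
  rewrite <- (neg_involutive x) at 2. rewrite meet_neg_join.
  rewrite <- meet_assoc, meet_neg_r, meet_left_comm, meet_zero_neg, meet_left_comm, meet_assoc.
  reflexivity.
Qed.

Lemma meet_join_zero_l x y : meet x (meet (join x y) zero) = meet (join x y) zero.
Proof. rewrite meet_zero_join, !meet_assoc, meet_idem; reflexivity. Qed.

Lemma join_meet_zero_join x y : join x (meet y zero) = join x (meet (join x y) zero).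
Proof.
  rewrite <- (join_neg_meet x (meet y zero)), meet_zero_join.
  f_equal. rewrite meet_left_comm, meet_zero_neg, meet_left_comm, meet_assoc.
  reflexivity.
Qed.

Lemma meet_joinE x y : meet x (join x y) = join x (meet y zero).
Proof.
  rewrite join_meet_zero_join.
  set (s := join x y); set (z := meet s zero); set (w := meet (neg z) x).
  assert (neg_z : neg z = join (neg x) s).
  { unfold z. rewrite neg_meet_zero, join_neg_r.
    unfold s. rewrite join_left_comm, join_assoc, join_neg_r, <- !join_assoc, (join_comm one y).
    reflexivity. }
  assert (w_zero : meet w zero = z).
  { unfold w. rewrite <- meet_assoc, meet_left_comm, meet_zero_neg.
    unfold z. rewrite meet_zero_idem. unfold s. apply meet_join_zero_l. }
  assert (z_w : join z w = w).
  { rewrite <- w_zero at 1; rewrite join_comm; apply join_meet_zero. }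
  rewrite <- (meet_neg_join x s), <- neg_z, join_comm, <- (join_neg_meet z x).
  fold w. rewrite z_w. apply meet_comm.
Qed.

Lemma same_fibre_meet_zero a b :
  same_fibre meet join a b -> meet a zero = meet b zero.
Proof.
  intros [Ha Hb].
  rewrite <- Ha at 1. rewrite <- Hb at 2.
  rewrite <- !meet_assoc, !meet_join_zero_l, join_comm. reflexivity.
Qed.

Lemma same_fibre_bottom a : same_fibre meet join (meet a zero) a.
Proof.
  split.
  - rewrite join_comm, join_meet_zero, meet_comm, meet_assoc, meet_idem. reflexivity.
  - rewrite join_meet_zero. apply meet_idem.
Qed.

Lemma same_fibre_zero_of_meet_zero z : meet z zero = zero -> same_fibre meet join z zero.
Proof.
  intro Hz. split.
  - rewrite join_0r. apply meet_idem.
  - rewrite join_0l, meet_comm. exact Hz.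
Qed.

Lemma is_fibre_top_neg_bottom a : is_fibre_top meet join (neg (meet a zero)).
Proof.
  intros b Hb.
  assert (Hb0 : meet a zero = meet b zero).
  { rewrite (same_fibre_meet_zero _ _ Hb), meet_zero_neg, meet_zero_idem. reflexivity. }
  rewrite Hb0, neg_meet, <- one_def, meet_neg_join. apply meet_1r.
Qed.

Lemma fibre_top_bottom_trivial a b :
  is_fibre_top meet join a -> a = meet a zero -> same_fibre meet join b a -> b = a.
Proof.
  intros top_a bottom_a Hb.
  rewrite <- (top_a b Hb), bottom_a, meet_left_comm, (same_fibre_meet_zero _ _ Hb).
  rewrite meet_assoc, meet_idem. reflexivity.
Qed.

Section VarietyK.
Variable J : A -> A.
Hypothesis HK : is_K meet join neg zero one J.

Lemma J_bottom a : J (meet a zero) = zero.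
Proof. rewrite <- meet_neg_r. exact (K_J4 _ _ _ _ _ _ _ HK a). Qed.

Lemma J_zero : J zero = zero.
Proof. generalize (J_bottom one). rewrite meet_1l. trivial. Qed.

Lemma join_J x : join x (J x) = x.
Proof.
  rewrite <- (join_0r x) at 2.
  rewrite <- (K_J2 _ _ _ _ _ _ _ HK), J_zero. apply join_0r.
Qed.

Lemma meet_J_zero x : meet (J x) zero = zero.
Proof.
  rewrite <- meet_neg_r. apply neg_inj.
  rewrite neg_meet, neg_involutive, join_comm, (K_J1 _ _ _ _ _ _ _ HK), one_def.
  reflexivity.
Qed.

(* The preimage is p_{0i} (J2 c), with A_i the fibre of a. *)
Lemma p_map_surjective a c : fibre_le meet join a c ->
  exists a', same_fibre meet join a' a /\ p_map meet join a' c = c.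
Proof.
  intros [_ Hc].
  rewrite (join_left_comm c a c), join_idem, (join_comm a c), meet_joinE in Hc.
  exists (join (meet a zero) (J c)).
  unfold same_fibre, p_map; split; [split|].
  - rewrite meet_joinE, <- join_assoc, (join_comm (J c)), join_assoc, join_idem.
    reflexivity.
  - rewrite meet_joinE, meet_zero_join, <- (meet_assoc (meet a zero) (J c) zero),
      meet_J_zero, meet_zero_idem, join_meet_zero.
    reflexivity.
  - rewrite meet_joinE, <- join_assoc, <- (meet_joinE (J c) c), (join_comm (J c) c),
      join_J, (meet_comm (J c) c), (K_J3 _ _ _ _ _ _ _ HK), (join_comm (meet a zero) c), Hc.
    reflexivity.
Qed.

Section LowestFibreTwo.
Hypothesis L2 : lowest_fibre_two meet join zero.

Lemma zero_neq_one : zero <> one.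
Proof.
  destruct L2 as [u [v [Huv Hfib]]]. intro E. apply Huv.
  assert (in_fibre_zero : forall z, same_fibre meet join z zero -> z = zero).
  { intros z [_ Hz]. rewrite join_0l in Hz.
    rewrite <- (meet_1l z), <- E. exact Hz. }
  rewrite (in_fibre_zero u), (in_fibre_zero v); firstorder.
Qed.

Lemma J_zero_or_one x : J x = zero \/ J x = one.
Proof.
  pose proof zero_neq_one as zero_one.
  destruct L2 as [u [v [_ Hfib]]].
  assert (Hz : zero = u \/ zero = v).
  { apply Hfib, same_fibre_zero_of_meet_zero, meet_idem. }
  assert (Ho : one = u \/ one = v).
  { apply Hfib, same_fibre_zero_of_meet_zero, meet_1l. }
  assert (HJ : J x = u \/ J x = v).
  { apply Hfib, same_fibre_zero_of_meet_zero, meet_J_zero. }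
  destruct Hz, Ho, HJ; first [left; congruence | right; congruence | congruence].
Qed.

Lemma J2_canonical_of_lowest_fibre_two : J2_canonical meet join zero one J.
Proof.
  intro a. destruct J_zero_or_one with a as [Ja|Ja].
  - assert (bottom_a : a = meet a zero).
    { rewrite <- Ja. symmetry. exact (K_J3 _ _ _ _ _ _ _ HK a). }
    split; [|intros _; exact Ja].
    intros [top_a [b [Hb b_neq_a]]].
    destruct (b_neq_a (fibre_top_bottom_trivial a b top_a bottom_a Hb)).
  - assert (top_a : a = neg (meet a zero)).
    { rewrite neg_meet_zero, join_neg_r, <- Ja. symmetry. apply join_J. }
    split; [intros _; exact Ja|].
    intros not_top. destruct not_top. split.
    + rewrite top_a. apply is_fibre_top_neg_bottom.
    + exists (meet a zero). split; [apply same_fibre_bottom|].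
      intro E. apply zero_neq_one. rewrite <- Ja, <- E. symmetry. apply J_bottom.
Qed.

End LowestFibreTwo.
End VarietyK.
End InvolutiveBisemilattice.

Theorem lemma4p3 (A : Type) (meet join : A -> A -> A) (neg J2 : A -> A)
    (zero one : A) (HK : is_K meet join neg zero one J2) :
  (* (i) *)
  is_IBS meet join neg zero one /\
  (* (ii) every p_ij (i <= j) is surjective *)
  (forall a c : A, fibre_le meet join a c ->
     exists a' : A, same_fibre meet join a' a /\ p_map meet join a' c = c) /\
  (* (iii) *)
  (lowest_fibre_two meet join zero ->
     (exists J : A -> A, is_K meet join neg zero one J /\
                         J2_canonical meet join zero one J) /\
     (forall J : A -> A, is_K meet join neg zero one J ->
                         J2_canonical meet join zero one J)).
Proof.
  pose proof (K_ibs _ _ _ _ _ _ _ HK) as H.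
  split; [exact H|]. split.
  - exact (p_map_surjective _ _ _ _ _ _ H _ HK).
  - intro L2. split.
    + exists J2. split; [exact HK|].
      exact (J2_canonical_of_lowest_fibre_two _ _ _ _ _ _ H _ HK L2).
    + intros J HJ. exact (J2_canonical_of_lowest_fibre_two _ _ _ _ _ _ H _ HJ L2).
Qed.
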